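(* For each $n\in\mathbb N$, $$1\le\liminf_{x\to+\infty}\frac{\mathbb P^T_n(x)}{\mathrm{Diag}\,\mathbb P(x)}\le\limsup_{x\to+\infty}\frac{\mathbb P^T_n(x)}{\mathrm{Diag}\,\mathbb P(x)}\le2.$$ In particular, $\mathrm{Diag}\,\mathbb P(x)=\Theta\left(\mathbb P^T_n(x)\right)$ as $x\to+\infty$.
   Context: Let $p_n$ denote the $n$-th prime number. Define $p^{(0)}_n=n$ and recursively $p^{(k+1)}_n=p_{p^{(k)}_n}$ for $k\in\mathbb N_0$. Let $\mathbb P^T_n=\{p^{(k)}_n:k\in\mathbb N\}$ and $\mathrm{Diag}\,\mathbb P=\{p^{(k)}_k:k\in\mathbb N\}$. For $A\subset\mathbb N$ and $x\ge1$, $A(x)=\#\{a\le x:a\in A\}$. *)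

From HB Require Import structures.
From mathcomp Require Import all_boot all_order all_algebra.
From mathcomp Require Import all_classical all_reals all_analysis.
Set Implicit Arguments. Unset Strict Implicit. Unset Printing Implicit Defensive.
Import Order.TTheory GRing.Theory Num.Theory.
Local Open Scope ring_scope.

Lemma exists_prime_above (m : nat) : exists p, (m < p)%N && prime p.
Proof. by case: (prime_above m) => p h1 h2; exists p; rewrite h1 h2. Qed.

Definition next_prime (m : nat) : nat := ex_minn (exists_prime_above m).

(* p_n = the n-th prime, p_1 = 2, p_2 = 3, ... (p_0 = 1 is a junk value). *)
Definition nth_prime (n : nat) : nat := iter n next_prime 1%N.

Definition prime_iter (k n : nat) : nat := iter k nth_prime n.

Definition PT (n : nat) : set nat := [set m | exists2 k, (1 <= k)%N & prime_iter k n = m].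

Definition DiagP : set nat := [set m | exists2 k, (1 <= k)%N & prime_iter k k = m].

Definition count_upto {R : realType} (A : set nat) (x : R) : nat :=
  count (fun a : nat => (a%:R <= x) && `[< A a >]) (iota 0 (Num.truncn x).+1).

From HB Require Import structures.
From mathcomp Require Import all_boot all_order all_algebra.
From mathcomp Require Import all_classical all_reals all_analysis.
From mathcomp Require Import zify lra.
Set Implicit Arguments. Unset Strict Implicit. Unset Printing Implicit Defensive.
Import Order.TTheory GRing.Theory Num.Theory.
Import numFieldNormedType.Exports.
Local Open Scope ring_scope.
Local Open Scope classical_set_scope.

(* Both P^T_n and Diag P are the ranges of strictly increasing sequences,
   k |-> p^(k)_n and k |-> p^(k)_k (k >= 1), so with A = P^T_n(x) and
   D = Diag P(x) we have A >= k iff p^(k)_n <= x, and D >= k iff p^(k)_k <= x.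
   Since p^(k) is monotone in its index, p^(D)_n <= p^(D)_D <= x when D > n,
   whence D <= A + n; and for k = A/2, k <= p^(k)_n gives
   p^(k)_k <= p^(k)_(p^(k)_n) = p^(2k)_n <= p^(A)_n <= x, whence A <= 2D + 1.
   As D(x) tends to infinity, A/D eventually lies within any e of [1, 2]. *)

Lemma next_prime_gt m : (m < next_prime m)%N.
Proof. by rewrite /next_prime; case: ex_minnP => p /andP[]. Qed.

Lemma nth_prime_ltS m : (nth_prime m < nth_prime m.+1)%N.
Proof. by rewrite /nth_prime iterS next_prime_gt. Qed.

Lemma nth_prime_leq_mono : {mono nth_prime : a b / (a <= b)%N}.
Proof. exact/leq_mono/(homo_ltn ltn_trans nth_prime_ltS). Qed.

Lemma nth_prime_gt m : (m < nth_prime m)%N.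
Proof. by elim: m => // m IHm; apply: leq_ltn_trans IHm (nth_prime_ltS m). Qed.

Lemma prime_iterD a b n : prime_iter (a + b) n = prime_iter a (prime_iter b n).
Proof. exact: iterD. Qed.

Lemma prime_iter_ltS k n : (prime_iter k n < prime_iter k.+1 n)%N.
Proof. by rewrite /prime_iter iterS nth_prime_gt. Qed.

Lemma prime_iter_ltn n : {homo prime_iter^~ n : a b / (a < b)%N}.
Proof. exact: homo_ltn ltn_trans (prime_iter_ltS^~ n). Qed.

Lemma prime_iter_leq k : {homo prime_iter k : a b / (a <= b)%N}.
Proof.
by elim: k => // k IHk a b ab; rewrite /prime_iter !iterS nth_prime_leq_mono IHk.
Qed.

Lemma prime_iter_ge k n : (k <= prime_iter k n)%N.
Proof. by elim: k => // k IHk; apply: leq_ltn_trans IHk (prime_iter_ltS k n). Qed.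

Lemma prime_iter_diag_ltn : {homo (fun k => prime_iter k k) : a b / (a < b)%N}.
Proof.
apply: homo_ltn ltn_trans _ => k.
exact: leq_trans (prime_iter_ltS k k) (prime_iter_leq k.+1 (leqnSn k)).
Qed.

Section CountImage.
Variable g : nat -> nat.
Hypothesis g_incr : {homo g : a b / (a < b)%N}.
Let S : set nat := [set m | exists2 j, (1 <= j)%N & g j = m].
Let g_leq : {mono g : a b / (a <= b)%N} := leq_mono g_incr.

Lemma count_iota_image_gtE m k :
  (k < count (fun a => `[< S a >]) (iota 0 m))%N = (g k.+1 < m)%N.
Proof.
elim: m k => [//|m IHm] k.
rewrite -[X in iota 0 X]addn1 iotaD count_cat /= add0n addn0.
case: asboolP => [[[|j] //= _ gj]|Sm]; last first.
  rewrite addn0 IHm ltnS [RHS]leq_eqVlt; case: eqP => [gkm|//].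
  by case: Sm; exists k.+1.
have -> : count (fun a => `[< S a >]) (iota 0 m) = j.
  by apply/eqP/eqn_gtP => i; rewrite IHm -gj (leqW_mono g_leq).
by rewrite addn1 -gj ltnS [RHS]ltnS g_leq.
Qed.

Lemma count_upto_image_geE (R : realType) (x : R) k : (1 <= k)%N ->
  (k <= count_upto S x)%N = ((g k)%:R <= x).
Proof.
case: k => // k _; rewrite /count_upto.
have [x0|x_lt0] := leP 0 x; last first.
  have nat_gtx a : (a%:R <= x) = false.
    by rewrite leNgt (lt_le_trans x_lt0).
  rewrite (@eq_count _ _ pred0) ?count_pred0 ?nat_gtx // => a.
  by rewrite /= nat_gtx.
rewrite (@eq_in_count _ _ (fun a => `[< S a >])); last first.
  by move=> a; rewrite mem_iota ltnS -truncn_ge_nat // => /andP[_ ->].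
by rewrite count_iota_image_gtE ltnS truncn_ge_nat.
Qed.

Lemma count_upto_image_near_ge (R : realType) (K : nat) :
  \forall x \near +oo, (K <= @count_upto R S x)%N.
Proof.
exists (g K.+1)%:R; split=> [|x gx]; first exact: num_real.
by apply: ltnW; rewrite count_upto_image_geE // ltW.
Qed.
End CountImage.

Section PrimeIterCounts.
Variables (R : realType) (n : nat).
Local Notation A x := (count_upto (PT n) x).
Local Notation D x := (count_upto DiagP x).

Lemma count_PT_geE (x : R) k :
  (1 <= k)%N -> (k <= A x)%N = ((prime_iter k n)%:R <= x).
Proof. exact: (count_upto_image_geE (prime_iter_ltn n) x). Qed.

Lemma count_DiagP_geE (x : R) k :
  (1 <= k)%N -> (k <= D x)%N = ((prime_iter k k)%:R <= x).
Proof. exact: (count_upto_image_geE prime_iter_diag_ltn x). Qed.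

Lemma count_DiagP_le (x : R) : (D x)%:R <= (A x)%:R + n%:R :> R.
Proof.
rewrite -natrD ler_nat.
have [dn|nd] := leqP (D x) n; first exact: leq_trans dn (leq_addl _ _).
apply: leq_trans (leq_addr n _).
have d1 : (1 <= D x)%N := leq_ltn_trans (leq0n n) nd.
have diag_le : (prime_iter (D x) (D x))%:R <= x by rewrite -count_DiagP_geE.
by rewrite count_PT_geE // (le_trans _ diag_le) // ler_nat prime_iter_leq // ltnW.
Qed.

Lemma count_PT_le (x : R) : (A x)%:R <= 2 * (D x)%:R + 1 :> R.
Proof.
rewrite -natrM natr1 ler_nat.
suff: (A x %/ 2 <= D x)%N by lia.
have [->//|k1] := posnP (A x %/ 2)%N.
have PT_le : (prime_iter (A x) n)%:R <= x by rewrite -count_PT_geE //; lia.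
rewrite count_DiagP_geE //; apply: le_trans PT_le; rewrite ler_nat.
apply: leq_trans (prime_iter_leq _ (prime_iter_ge _ n)) _.
by rewrite -prime_iterD (leq_mono (prime_iter_ltn n)); lia.
Qed.
End PrimeIterCounts.

Section LimfBounds.
Context {T : choiceType} {X : filteredType T} {R : realType}.
Context (F : set_system X) (f : X -> \bar R).

Lemma limf_esup_le_near (c : \bar R) :
  (\forall x \near F, (f x <= c)%E) -> (limf_esup f F <= c)%E.
Proof.
move=> fc; rewrite limf_esupE.
apply: (@le_trans _ _ (ereal_sup (f @` [set x | (f x <= c)%E]))).
  by apply: ereal_inf_lbound; exists [set x | (f x <= c)%E].
by apply: ge_ereal_sup => _ [x fxc <-].
Qed.

Lemma limf_einf_ge_near (c : \bar R) :
  (\forall x \near F, (c <= f x)%E) -> (c <= limf_einf f F)%E.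
Proof.
move=> cf; rewrite limf_einfE.
apply: (@le_trans _ _ (ereal_inf (f @` [set x | (c <= f x)%E]))).
  by apply: le_ereal_inf_tmp => _ [x cfx <-].
by apply: ereal_sup_ubound; exists [set x | (c <= f x)%E].
Qed.

Lemma limf_einf_le_esup : ProperFilter F -> (limf_einf f F <= limf_esup f F)%E.
Proof.
move=> F_proper; rewrite limf_einfE limf_esupE.
apply: ge_ereal_sup => _ [V FV <-]; apply: le_ereal_inf_tmp => _ [W FW <-].
have [x [Vx Wx]] := filter_ex (filterI FV FW).
apply: (@le_trans _ _ (f x)).
  by apply: ereal_inf_lbound; exists x.
by apply: ereal_sup_ubound; exists x.
Qed.
End LimfBounds.

Section Asymptotics.
Variables (R : realType) (n : nat).
Local Notation A x := (count_upto (PT n) x).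
Local Notation D x := (count_upto DiagP x).

Lemma count_ratio_near_bounds (e : R) : 0 < e ->
  \forall x \near +oo, 1 - e <= (A (x : R))%:R / (D x)%:R <= 2 + e.
Proof.
move=> e0; set K := (Num.truncn ((n.+1)%:R / e)).+1.
apply: filterS (count_upto_image_near_ge prime_iter_diag_ltn R K) => x.
rewrite -(ler_nat R) => KD.
have eK : n%:R + 1 < e * K%:R by rewrite natr1 mulrC -ltr_pdivrMr // truncnS_gt.
have eD : e * K%:R <= e * (D x)%:R by rewrite ler_pM2l.
have D0 : 0 < (D x)%:R :> R by apply: lt_le_trans KD.
have DA := count_DiagP_le n x; have AD := count_PT_le n x.
have n0 := ler0n R n.
by rewrite ler_pdivlMr // ler_pdivrMr //; apply/andP; split; lra.
Qed.

Lemma count_DiagP_Theta_PT : exists c1 c2 x0 : R, [/\ 0 < c1, 0 < c2 &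
  forall x, x0 <= x -> c1 * (A x)%:R <= (D x)%:R /\ (D x)%:R <= c2 * (A x)%:R].
Proof.
have [M [_ counts_pos]] := filterI
  (count_upto_image_near_ge (prime_iter_ltn n) R 1)
  (count_upto_image_near_ge prime_iter_diag_ltn R 1).
exists 3^-1, n.+1%:R, (M + 1); split=> // x Mx.
have xM : M < x by apply: lt_le_trans Mx; rewrite ltrDl.
have [+ +] := counts_pos x xM; rewrite -!(ler_nat R) => A1 D1.
have DA := count_DiagP_le n x; have AD := count_PT_le n x.
have n0 := ler0n R n.
by split; [lra | rewrite -natr1; nra].
Qed.
End Asymptotics.

Theorem theorem17 (R : realType) (n : nat) (hn : (1 <= n)%N) :
  let f := fun x : R => ((count_upto (PT n) x)%:R / (count_upto DiagP x)%:R : R)%:E in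
  [/\ (1%:E <= limf_einf f (pinfty_nbhs R))%E,
      (limf_einf f (pinfty_nbhs R) <= limf_esup f (pinfty_nbhs R))%E,
      (limf_esup f (pinfty_nbhs R) <= 2%:E)%E
    & exists c1 c2 x0 : R, [/\ 0 < c1, 0 < c2 &
        forall x : R, x0 <= x ->
          c1 * (count_upto (PT n) x)%:R <= (count_upto DiagP x)%:R
          /\ (count_upto DiagP x)%:R <= c2 * (count_upto (PT n) x)%:R]].
Proof.
move=> f; split.
- apply/lee_subgt0Pr => e e0; apply: limf_einf_ge_near.
  by apply: filterS (count_ratio_near_bounds n e0) => x /andP[+ _]; rewrite lee_fin.
- exact: limf_einf_le_esup.
- apply/lee_addgt0Pr => e e0; apply: limf_esup_le_near.
  by apply: filterS (count_ratio_near_bounds n e0) => x /andP[_ +]; rewrite lee_fin.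
- exact: count_DiagP_Theta_PT.
Qed.
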